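(* Let $I$ be a composition of $n$ with valley set $V$, and let $Cl_V\subseteq Cl_n$ be the subalgebra generated by $(c_v)_{v\in V}$. For $c\in Cl_V$ define $f_c:M_I\to M_I$ by $f_c(x\epsilon_I)=xc\,\epsilon_I$ for all $x\in Cl_n$. Then each $f_c$ is a well-defined endomorphism of $M_I$ as an $HCl_n(0)$-module, $c\mapsto f_c$ defines a right action of $Cl_V$ on $M_I$ (that is, $f_{cc'}=f_{c'}\circ f_c$) commuting with the left $HCl_n(0)$-action, and $c\mapsto f_c$ is a bijective, $\mathbb{Z}/2$-grading-preserving map from $Cl_V$ onto $\operatorname{End}_{HCl_n(0)}(M_I)$. In other words, it is a grading-preserving anti-isomorphism of algebras, which the paper describes as a graded isomorphism.
   Context: For a composition $I=(i_1,\dots,i_r)$ of $n$, $\operatorname{Des}(I)=\{i_1,\dots,i_1+\cdots+i_{r-1}\}\subseteq[1,n-1]$. A valley of $I$ is $k\in\{1,\dots,n\}$ with $k\notin\operatorname{Des}(I)$ and (either $k=1$ or $k-1\in\operatorname{Des}(I)$). $Cl_n$ is the complex Clifford algebra on $c_1,\dots,c_n$ with $c_ic_j=-c_jc_i$ ($i\ne j$) and $c_i^2=-1$. $HCl_n(0)$ is the complex algebra generated by $T_1,\dots,T_{n-1}$ and $c_1,\dots,c_n$ with the Clifford relations, $T_i^2=-T_i$, $T_iT_j=T_jT_i$ ($|i-j|>1$), $T_iT_{i+1}T_i=T_{i+1}T_iT_{i+1}$, $T_ic_j=c_jT_i$ ($j\ne i,i+1$), $T_ic_i=c_{i+1}T_i$,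 and $(T_i+1)c_{i+1}=c_i(T_i+1)$. It is $\mathbb{Z}/2$-graded with $T_i$ even and $c_j$ odd. $H_n(0)$ is the subalgebra generated by the $T_i$. $S_I=\mathbb{C}\epsilon_I$ is the $H_n(0)$-module with $T_j\epsilon_I=-\epsilon_I$ if $j\in\operatorname{Des}(I)$ and $T_j\epsilon_I=0$ otherwise, and $M_I=HCl_n(0)\otimes_{H_n(0)}S_I$. $M_I$ is a free $Cl_n$-module of rank one generated by $\epsilon_I$, with basis $c_D\epsilon_I$ for $D\subseteq\{1,\dots,n\}$ (where $c_D=c_{d_1}\cdots c_{d_k}$ for $D=\{d_1<\dots<d_k\}$), graded by the parity of $|D|$. *)

From HB Require Import structures.
From mathcomp Require Import all_boot all_order all_algebra.
From mathcomp Require Import complex.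
Set Implicit Arguments. Unset Strict Implicit. Unset Printing Implicit Defensive.
Import Order.TTheory GRing.Theory Num.Theory.
Local Open Scope ring_scope.

Definition is_composition (n : nat) (I : seq nat) : bool :=
  all (fun i => 0 < i)%N I && (sumn I == n).

Definition Des (I : seq nat) : seq nat :=
  [seq sumn (take k I) | k <- iota 1 (size I).-1].

Definition is_valley (n : nat) (I : seq nat) (k : nat) : bool :=
  [&& (1 <= k <= n)%N, k \notin Des I & (k == 1%N) || (k.-1 \in Des I)].

(* The valley set V, with generator c_k indexed by the ordinal k-1 : 'I_n *)
Definition valleys (n : nat) (I : seq nat) : {set 'I_n} :=
  [set i : 'I_n | is_valley n I i.+1].

Section Ops.
Variables (C : nzRingType) (M : lmodType C) (n : nat).
(* c : nat -> (M -> M) gives the action of c_1, ..., c_n (1-based indices) *)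
Variable c : nat -> M -> M.

(* c_D = c_{d_1} ... c_{d_k} for D = {d_1 < ... < d_k}, as an operator on M;
   D is a set of ordinals, the ordinal i standing for the index i+1.
   (enum of a set of ordinals lists it in increasing order.) *)
Definition cD (D : {set 'I_n}) : M -> M :=
  foldr (fun (i : 'I_n) f => c i.+1 \o f) id (enum D).

Definition ClOp (a : {ffun {set 'I_n} -> C}) : M -> M :=
  fun m => \sum_(D : {set 'I_n}) a D *: cD D m.

(* Elements of the image of Cl_n acting on M; with support restriction P on D *)
Definition in_Cl_supp (P : {set 'I_n} -> bool) (x : M -> M) : Prop :=
  exists a : {ffun {set 'I_n} -> C},
    (forall D, ~~ P D -> a D = 0) /\ x =1 ClOp a.

Definition in_Cl (x : M -> M) : Prop := in_Cl_supp (fun _ => true) x.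
Definition in_ClV (V : {set 'I_n}) (x : M -> M) : Prop :=
  in_Cl_supp (fun D => D \subset V) x.
Definition in_ClV_even (V : {set 'I_n}) (x : M -> M) : Prop :=
  in_Cl_supp (fun D => (D \subset V) && ~~ odd #|D|) x.
Definition in_ClV_odd (V : {set 'I_n}) (x : M -> M) : Prop :=
  in_Cl_supp (fun D => (D \subset V) && odd #|D|) x.

Variable eps : M.
(* Z/2-grading of M (basis c_D eps graded by the parity of |D|) *)
Definition M_even (m : M) : Prop :=
  exists x, in_Cl_supp (fun D => ~~ odd #|D|) x /\ m = x eps.
Definition M_odd (m : M) : Prop :=
  exists x, in_Cl_supp (fun D => odd #|D|) x /\ m = x eps.

Definition even_map (f : M -> M) : Prop :=
  (forall m, M_even m -> M_even (f m)) /\ (forall m, M_odd m -> M_odd (f m)).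
Definition odd_map (f : M -> M) : Prop :=
  (forall m, M_even m -> M_odd (f m)) /\ (forall m, M_odd m -> M_even (f m)).

Definition is_fc (x0 : M -> M) (f : M -> M) : Prop :=
  forall x, in_Cl x -> f (x eps) = x (x0 eps).

End Ops.

Section HCl.
Variables (C : nzRingType) (M : lmodType C) (n : nat).
Variables (T c : nat -> M -> M).

Definition HCl_module : Prop :=
  [/\ (forall i, (1 <= i <= n.-1)%N -> linear (T i)),
      (forall j, (1 <= j <= n)%N -> linear (c j)),
      [/\ (forall i j m, (1 <= i <= n)%N -> (1 <= j <= n)%N -> i != j ->
          c i (c j m) = - c j (c i m)) &
      (forall i m, (1 <= i <= n)%N -> c i (c i m) = - m)],
      [/\ (forall i m, (1 <= i <= n.-1)%N -> T i (T i m) = - T i m),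
      (forall i j m, (1 <= i <= n.-1)%N -> (1 <= j <= n.-1)%N ->
          (i.+1 < j)%N || (j.+1 < i)%N -> T i (T j m) = T j (T i m)) &
      (forall i m, (1 <= i)%N -> (i.+1 <= n.-1)%N ->
          T i (T i.+1 (T i m)) = T i.+1 (T i (T i.+1 m)))] &
      [/\ (forall i j m, (1 <= i <= n.-1)%N -> (1 <= j <= n)%N ->
             j != i -> j != i.+1 -> T i (c j m) = c j (T i m)),
          (forall i m, (1 <= i <= n.-1)%N -> T i (c i m) = c i.+1 (T i m)) &
          (forall i m, (1 <= i <= n.-1)%N ->
             T i (c i.+1 m) + c i.+1 m = c i (T i m) + c i m)]].

Definition HCl_endo (f : M -> M) : Prop :=
  [/\ linear f,
      (forall i m, (1 <= i <= n.-1)%N -> f (T i m) = T i (f m)) &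
      (forall j m, (1 <= j <= n)%N -> f (c j m) = c j (f m))].
End HCl.

(* [M_I] is free of rank one over [Cl_n] on [eps], so an [HCl_n(0)]-endomorphism [g]
   commutes with every [x] in [Cl_n] and is right multiplication by the [b] with
   [g eps = b eps].  Commuting with [T_i] makes [b eps] an eigenvector of each [T_i] with
   eigenvalue [-1] if [i] is a descent and [0] otherwise.  Computing [T_i] on the basis
   [c_D eps] (only [c_i, c_(i+1)] fail to commute with [T_i]) turns this into linear
   relations between coordinates: a descent [i] kills the coordinates of the monomials
   containing [c_i], a non-descent [i] those containing [c_(i+1)], which leaves exactly
   the monomials in the valleys.  Conversely, for [b] in [Cl_V] the vector [b eps] is such an
   eigenvector, and the straightening rule [T_i Cl_n <= Cl_n T_i + Cl_n] gives the universal
   property of the induced module [M_I], producing the endomorphism.  Parities of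
   monomials add under multiplication, which gives the grading. *)

From HB Require Import structures.
From mathcomp Require Import all_boot all_order all_algebra.
From mathcomp Require Import complex.
From mathcomp Require Import zify ring.
Import Order.TTheory GRing.Theory Num.Theory.
Local Open Scope ring_scope.
Set Implicit Arguments. Unset Strict Implicit. Unset Printing Implicit Defensive.

Section LinearFun.
Variables (R : nzRingType) (M : lmodType R) (f : M -> M).
Hypothesis f_lin : linear f.

Lemma linfD u v : f (u + v) = f u + f v.
Proof. by rewrite -[u in LHS]scale1r f_lin scale1r. Qed.

Lemma linf0 : f 0 = 0.
Proof. by apply/(addrI (f 0)); rewrite -linfD !addr0. Qed.

Lemma linfZ k u : f (k *: u) = k *: f u.
Proof. by rewrite -[k *: u]addr0 f_lin linf0 addr0. Qed.

Lemma linfN u : f (- u) = - f u.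
Proof. by rewrite -scaleN1r linfZ scaleN1r. Qed.

Lemma linf_sum (I : Type) (r : seq I) (P : pred I) (F : I -> M) :
  f (\sum_(i <- r | P i) F i) = \sum_(i <- r | P i) f (F i).
Proof. by elim/big_rec2: _ => [|i y1 y2 _ <-]; rewrite ?linf0 ?linfD. Qed.

End LinearFun.

Section OrdinalSets.
Variable n : nat.

Definition set_lt (k : nat) (D : {set 'I_n}) := [set x in D | (x < k)%N].
Definition set_ge (k : nat) (D : {set 'I_n}) := [set x in D | (k <= x)%N].

Lemma filter_lt_ge (k : nat) (s : seq 'I_n) : sorted ltn (map val s) ->
  [seq x : 'I_n <- s | (x < k)%N] ++ [seq x : 'I_n <- s | (k <= x)%N] = s.
Proof.
elim: s => [|x s IH] //= s_sorted.
have {}IH := IH (path_sorted s_sorted).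
have x_min : all (fun y : 'I_n => (x < y)%N) s.
  by have := order_path_min ltn_trans s_sorted; rewrite all_map.
case: (ltnP x k) => [_|le_k_x] /=.
  by rewrite -[in RHS]IH.
have -> : [seq y : 'I_n <- s | (y < k)%N] = [::].
  rewrite -(filter_pred0 s); apply: eq_in_filter => y /(allP x_min) /= lt_xy.
  by rewrite ltnNge (leq_trans le_k_x (ltnW lt_xy)).
by congr (_ :: _); apply/all_filterP; apply: sub_all x_min => y /= /ltnW; apply: leq_trans.
Qed.

Lemma enum_set_lt_ge k (D : {set 'I_n}) : enum D = enum (set_lt k D) ++ enum (set_ge k D).
Proof.
rewrite /enum_mem -!enumT -(filter_lt_ge k (s := [seq x <- enum 'I_n | x \in D])).
  rewrite -!filter_predI; congr (_ ++ _); apply: eq_filter => x /=;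
  by rewrite !inE /=; case: (x \in D); case: (_ <= _)%N.
rewrite sorted_map sorted_filter -?sorted_map ?val_enum_ord ?iota_ltn_sorted //.
by move=> ? ? ?; apply: ltn_trans.
Qed.

End OrdinalSets.

Definition toggle n (j : 'I_n) (D : {set 'I_n}) := if j \in D then D :\ j else j |: D.

Definition clifford_action (R : nzRingType) (M : lmodType R) n (c : nat -> M -> M) :=
  [/\ forall j, (1 <= j <= n)%N -> linear (c j),
      forall i j m, (1 <= i <= n)%N -> (1 <= j <= n)%N -> i != j ->
        c i (c j m) = - c j (c i m) &
      forall i m, (1 <= i <= n)%N -> c i (c i m) = - m].

Lemma HCl_module_clifford (R : nzRingType) (M : lmodType R) n (T c : nat -> M -> M) :
  HCl_module n T c -> clifford_action n c.
Proof. by case=> _ ? [? ?]. Qed.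

Section Clifford.
Variables (R : comNzRingType) (M : lmodType R) (n : nat) (c : nat -> M -> M).
Hypothesis Hc : clifford_action n c.

Let c_lin j : (1 <= j <= n)%N -> linear (c j). Proof. by case: Hc => H _ _; apply: H. Qed.
Let c_anti i j m : (1 <= i <= n)%N -> (1 <= j <= n)%N -> i != j ->
  c i (c j m) = - c j (c i m).
Proof. by case: Hc => _ H _; apply: H. Qed.
Let c_sq i m : (1 <= i <= n)%N -> c i (c i m) = - m. Proof. by case: Hc => _ _ H; apply: H. Qed.

Lemma ord_gen (x : 'I_n) : (1 <= x.+1 <= n)%N.
Proof. by rewrite ltn_ord. Qed.

Definition cword (s : seq 'I_n) : M -> M := foldr (fun (i : 'I_n) f => c i.+1 \o f) id s.

Lemma cD_cword (D : {set 'I_n}) : cD c D = cword (enum D). Proof. by []. Qed.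

Lemma cword_cat s1 s2 m : cword (s1 ++ s2) m = cword s1 (cword s2 m).
Proof. by elim: s1 => //= x s ->. Qed.

Lemma cword_lin s : linear (cword s).
Proof. by elim: s => [|x s IH] //= a u v; rewrite /comp IH (c_lin (ord_gen x)). Qed.

Lemma cD_lin (D : {set 'I_n}) : linear (cD c D).
Proof. exact: cword_lin. Qed.

Lemma cD_window (j : 'I_n) (D : {set 'I_n}) m : cD c D m =
  cword (enum (set_lt j D)) ((if j \in D then c j.+1 else id) (cD c (set_ge j.+1 D) m)).
Proof.
rewrite cD_cword (enum_set_lt_ge j D) cword_cat (enum_set_lt_ge j.+1 (set_ge j D)) cword_cat.
have -> : set_ge j.+1 (set_ge j D) = set_ge j.+1 D.
  by apply/setP => x; rewrite !inE -andbA (andb_idl (@ltnW j x)).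
have -> : set_lt j.+1 (set_ge j D) = if j \in D then [set j] else set0.
  apply/setP => x; rewrite !inE ltnS -andbA -eqn_leq (inj_eq val_inj) eq_sym.
  by case: eqP => [->|/eqP/negbTE x_neq_j]; case: (j \in D); rewrite ?inE ?eqxx ?x_neq_j ?andbF.
by case: (j \in D); rewrite ?enum_set1 ?enum_set0.
Qed.

Lemma c_cword_anti (j : 'I_n) s m : j \notin s ->
  c j.+1 (cword s m) = (-1) ^+ size s *: cword s (c j.+1 m).
Proof.
elim: s m => [|x s IH] m /=; first by rewrite scale1r.
rewrite inE negb_or => /andP[j_neq_x j_notin_s].
rewrite /comp c_anti ?ord_gen ?eqSS // IH // (linfZ (c_lin (ord_gen x))).
by rewrite exprS mulN1r scaleNr.
Qed.

Lemma set_lt_toggle (j : 'I_n) (D : {set 'I_n}) : set_lt j (toggle j D) = set_lt j D.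
Proof.
apply/setP => x; rewrite !inE /toggle; case: (eqVneq x j) => [->|x_neq_j].
  by rewrite ltnn !andbF.
by case: (j \in D); rewrite ?inE ?(negbTE x_neq_j).
Qed.

Lemma set_ge_toggle (j : 'I_n) (D : {set 'I_n}) : set_ge j.+1 (toggle j D) = set_ge j.+1 D.
Proof.
apply/setP => x; rewrite !inE /toggle; case: (eqVneq x j) => [->|x_neq_j].
  by rewrite ltnn !andbF.
by case: (j \in D); rewrite ?inE ?(negbTE x_neq_j).
Qed.

Lemma mem_toggle (j : 'I_n) (D : {set 'I_n}) : (j \in toggle j D) = (j \notin D).
Proof. by rewrite /toggle; case: (j \in D); rewrite !inE eqxx. Qed.

Lemma odd_card_toggle (j : 'I_n) (D : {set 'I_n}) : odd #|toggle j D| = ~~ odd #|D|.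
Proof.
rewrite /toggle; case: ifP => j_in_D; last by rewrite cardsU1 j_in_D.
by rewrite [#|D|](cardsD1 j) j_in_D /= negbK.
Qed.

Lemma c_cD (j : 'I_n) (D : {set 'I_n}) : exists s : R, forall m,
  c j.+1 (cD c D m) = s *: cD c (toggle j D) m.
Proof.
have j_notin_lt : j \notin enum (set_lt j D) by rewrite mem_enum !inE ltnn andbF.
exists ((if j \in D then -1 else 1) * (-1) ^+ size (enum (set_lt j D))) => m.
rewrite (cD_window j D) (cD_window j (toggle j D)) set_lt_toggle set_ge_toggle mem_toggle.
rewrite c_cword_anti // -scalerA; case: (j \in D) => /=; last by rewrite scale1r.
by rewrite c_sq ?ord_gen // (linfN (cword_lin _)) scalerN scaleN1r.
Qed.

Lemma cword_cD s (E : {set 'I_n}) : exists (sg : R) (F : {set 'I_n}),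
  odd #|F| = odd (size s) (+) odd #|E| /\ forall m, cword s (cD c E m) = sg *: cD c F m.
Proof.
elim: s => [|x s [sg [F [odd_F sF]]]] /=.
  by exists 1, E; split => // m; rewrite scale1r.
have [s' s'F] := c_cD x F.
exists (sg * s'), (toggle x F); split; first by rewrite odd_card_toggle odd_F addNb.
by move=> m; rewrite /comp sF (linfZ (c_lin (ord_gen x))) s'F scalerA.
Qed.

Lemma ClOp_lin (a : {ffun {set 'I_n} -> R}) : linear (ClOp c a).
Proof.
move=> k u v; rewrite /ClOp scaler_sumr -big_split; apply: eq_bigr => D _ /=.
by rewrite cD_lin scalerDr !scalerA mulrC.
Qed.

Lemma ClOp_comb (k : R) (a b : {ffun {set 'I_n} -> R}) m :
  ClOp c [ffun D => k * a D + b D] m = k *: ClOp c a m + ClOp c b m.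
Proof.
rewrite /ClOp scaler_sumr -big_split; apply: eq_bigr => D _ /=.
by rewrite ffunE scalerDl scalerA.
Qed.

Section Support.
Implicit Types (P Q : {set 'I_n} -> bool) (x y : M -> M).

Lemma in_Cl_supp_eq P x y : x =1 y -> in_Cl_supp c P x -> in_Cl_supp c P y.
Proof. by move=> eq_xy [a [a_supp x_a]]; exists a; split => // m; rewrite -eq_xy. Qed.

Lemma in_Cl_supp_sub P Q x : (forall D, P D -> Q D) ->
  in_Cl_supp c P x -> in_Cl_supp c Q x.
Proof. by move=> PQ [a [a_supp x_a]]; exists a; split => // D /(contra (PQ D)); apply: a_supp. Qed.

Lemma in_Cl_supp_lin P x : in_Cl_supp c P x -> linear x.
Proof. by move=> [a [_ x_a]] k u v; rewrite !x_a ClOp_lin. Qed.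

Lemma in_Cl_supp_monomial P F (k : R) : P F \/ k = 0 ->
  in_Cl_supp c P (fun m => k *: cD c F m).
Proof.
move=> PF_k0; exists [ffun D => if D == F then k else 0]; split.
  move=> D PDn; rewrite ffunE; case: eqP PDn => // ->.
  by case: PF_k0 => [->|].
move=> m; rewrite /ClOp (bigD1 F) //= ffunE eqxx big1 ?addr0 // => D /negbTE D_neq_F.
by rewrite ffunE D_neq_F scale0r.
Qed.

Lemma in_Cl_supp_sum (J : finType) P (F : J -> M -> M) :
  (forall i, in_Cl_supp c P (F i)) -> in_Cl_supp c P (fun m => \sum_i F i m).
Proof.
move=> FP; have [a Ha] := fin_all_exists FP.
exists [ffun D => \sum_i a i D]; split.
  by move=> D PDn; rewrite ffunE big1 // => i _; case: (Ha i) => -> .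
move=> m; rewrite /ClOp (eq_bigr (fun D => \sum_i a i D *: cD c D m)); last first.
  by move=> D _; rewrite ffunE scaler_suml.
by rewrite exchange_big /=; apply: eq_bigr => i _; case: (Ha i) => _ ->.
Qed.

Lemma in_Cl_supp_comb P (k : R) x y : in_Cl_supp c P x -> in_Cl_supp c P y ->
  in_Cl_supp c P (fun m => k *: x m + y m).
Proof.
move=> [a [a_supp x_a]] [b [b_supp y_b]]; exists [ffun D => k * a D + b D]; split.
  by move=> D PDn; rewrite ffunE a_supp // b_supp // mulr0 addr0.
by move=> m; rewrite ClOp_comb x_a y_b.
Qed.

Lemma in_Cl_supp_comp P Q (S : {set 'I_n} -> bool) x y :
  (forall D E F : {set 'I_n}, P D -> Q E -> odd #|F| = odd #|D| (+) odd #|E| -> S F) ->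
  in_Cl_supp c P x -> in_Cl_supp c Q y -> in_Cl_supp c S (x \o y).
Proof.
move=> PQS [a [a_supp x_a]] [b [b_supp y_b]].
apply: (@in_Cl_supp_eq _ (fun m => \sum_D \sum_E (a D * b E) *: cD c D (cD c E m))).
  move=> m /=; rewrite x_a y_b /ClOp; apply: eq_bigr => D _.
  rewrite (linf_sum (cD_lin D)) scaler_sumr; apply: eq_bigr => E _.
  by rewrite (linfZ (cD_lin D)) scalerA.
apply: in_Cl_supp_sum => D; apply: in_Cl_supp_sum => E.
have [sg [F [odd_F DEF]]] := cword_cD (enum D) E.
apply: (@in_Cl_supp_eq _ (fun m => (a D * b E * sg) *: cD c F m)).
  by move=> m; rewrite (cD_cword D) DEF scalerA.
apply: in_Cl_supp_monomial.
case: (boolP (P D)) => PD; last by right; rewrite a_supp // !mul0r.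
case: (boolP (Q E)) => QE; last by right; rewrite b_supp // mulr0 mul0r.
by left; apply: (PQS D E) => //; rewrite odd_F -cardE.
Qed.

Lemma in_Cl_ClOp (a : {ffun {set 'I_n} -> R}) : in_Cl n c (ClOp c a).
Proof. by exists a; split. Qed.

Lemma in_ClV_Cl (V : {set 'I_n}) x : in_ClV c V x -> in_Cl n c x.
Proof. exact: in_Cl_supp_sub. Qed.

Lemma in_Cl_id : in_Cl n c id.
Proof.
apply: (@in_Cl_supp_eq _ (fun m => 1 *: cD c set0 m)); last by apply: in_Cl_supp_monomial; left.
by move=> m; rewrite scale1r cD_cword enum_set0.
Qed.

Lemma in_Cl_gen k : (1 <= k <= n)%N -> in_Cl n c (c k).
Proof.
case/andP => k_gt0 k_le_n; have k1_lt_n : (k.-1 < n)%N by rewrite prednK.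
apply: (@in_Cl_supp_eq _ (fun m => 1 *: cD c [set Ordinal k1_lt_n] m)).
  by move=> m; rewrite scale1r cD_cword enum_set1 /= prednK.
by apply: in_Cl_supp_monomial; left.
Qed.

Lemma in_Cl_comp x y : in_Cl n c x -> in_Cl n c y -> in_Cl n c (x \o y).
Proof. exact: in_Cl_supp_comp. Qed.

Lemma in_Cl_cword s : in_Cl n c (cword s).
Proof.
elim: s => [|x s IH]; first exact: in_Cl_id.
exact: in_Cl_comp (in_Cl_gen (ord_gen x)) IH.
Qed.

End Support.

Section RightMultiplication.
Variable eps : M.

Lemma is_fc_comb (k : R) x y f g : is_fc n c eps x f -> is_fc n c eps y g ->
  is_fc n c eps (fun m => k *: x m + y m) (fun m => k *: f m + g m).
Proof. by move=> fx gy z z_Cl; rewrite fx // gy // (in_Cl_supp_lin z_Cl). Qed.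

Lemma is_fc_comp x y f g : in_Cl n c x -> is_fc n c eps x f -> is_fc n c eps y g ->
  is_fc n c eps (x \o y) (g \o f).
Proof. by move=> x_Cl fx gy z z_Cl; rewrite /comp fx // (gy (z \o x)) //; apply: in_Cl_comp. Qed.

Lemma is_fc_parity (P Q S : {set 'I_n} -> bool) x f :
  (forall D E F : {set 'I_n}, P D -> Q E -> odd #|F| = odd #|D| (+) odd #|E| -> S F) ->
  in_Cl_supp c Q x -> is_fc n c eps x f -> forall m,
  (exists z, in_Cl_supp c P z /\ m = z eps) -> exists z, in_Cl_supp c S z /\ f m = z eps.
Proof.
move=> PQS x_Q fx m [z [z_P ->]]; exists (z \o x); split; first exact: in_Cl_supp_comp z_P x_Q.
by rewrite fx //; apply: in_Cl_supp_sub z_P.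
Qed.

Lemma is_fc_even_map (V : {set 'I_n}) x f :
  in_ClV_even c V x -> is_fc n c eps x f -> even_map n c eps f.
Proof.
by move=> x_even fx; split=> m; apply: (is_fc_parity _ x_even fx) => D E F /= PD /andP[_ QE] ->;
  move: PD QE; case: odd; case: odd.
Qed.

Lemma is_fc_odd_map (V : {set 'I_n}) x f :
  in_ClV_odd c V x -> is_fc n c eps x f -> odd_map n c eps f.
Proof.
by move=> x_odd fx; split=> m; apply: (is_fc_parity _ x_odd fx) => D E F /= PD /andP[_ QE] ->;
  move: PD QE; case: odd; case: odd.
Qed.

Hypothesis eps_free : injective (fun a : {ffun {set 'I_n} -> R} => ClOp c a eps).

Lemma is_fc_inj x y f : in_Cl n c x -> in_Cl n c y ->
  is_fc n c eps x f -> is_fc n c eps y f -> x =1 y.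
Proof.
move=> [a [_ x_a]] [b [_ y_b]] fx fy m.
have fe : x eps = y eps by rewrite -(fx id in_Cl_id) -(fy id in_Cl_id).
have a_b : a = b by apply: eps_free; rewrite /= -x_a -y_b.
by rewrite x_a y_b a_b.
Qed.

End RightMultiplication.
End Clifford.

Section Hecke.
Variables (R : comNzRingType) (M : lmodType R) (n : nat) (T c : nat -> M -> M).
Hypothesis HM : HCl_module n T c.

Let Hc : clifford_action n c := HCl_module_clifford HM.
Let T_lin i : (1 <= i <= n.-1)%N -> linear (T i). Proof. by case: HM => H _ _ _ _; apply: H. Qed.
Let c_lin j : (1 <= j <= n)%N -> linear (c j). Proof. by case: Hc => H _ _; apply: H. Qed.
Let c_anti i j m : (1 <= i <= n)%N -> (1 <= j <= n)%N -> i != j ->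
  c i (c j m) = - c j (c i m).
Proof. by case: Hc => _ H _; apply: H. Qed.
Let c_sq i m : (1 <= i <= n)%N -> c i (c i m) = - m. Proof. by case: Hc => _ _ H; apply: H. Qed.
Let T_c_far i j m : (1 <= i <= n.-1)%N -> (1 <= j <= n)%N -> j != i -> j != i.+1 ->
  T i (c j m) = c j (T i m).
Proof. by case: HM => _ _ _ _ [H _ _]; apply: H. Qed.
Let T_c_left i m : (1 <= i <= n.-1)%N -> T i (c i m) = c i.+1 (T i m).
Proof. by case: HM => _ _ _ _ [_ H _]; apply: H. Qed.
Let T_c_right i m : (1 <= i <= n.-1)%N -> T i (c i.+1 m) + c i.+1 m = c i (T i m) + c i m.
Proof. by case: HM => _ _ _ _ [_ _ H]; apply: H. Qed.

Lemma T_index_left i : (1 <= i <= n.-1)%N -> (1 <= i <= n)%N.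
Proof. by move=> /andP[? ?]; apply/andP; split; lia. Qed.

Lemma T_index_right i : (1 <= i <= n.-1)%N -> (1 <= i.+1 <= n)%N.
Proof. by move=> /andP[? ?]; apply/andP; split; lia. Qed.

Lemma T_c_rightE i m : (1 <= i <= n.-1)%N -> T i (c i.+1 m) = c i (T i m) + c i m - c i.+1 m.
Proof. by move=> i_range; apply: (addIr (c i.+1 m)); rewrite T_c_right // subrK. Qed.

Lemma T_cword_comm i s m : (1 <= i <= n.-1)%N ->
  (forall x : 'I_n, x \in s -> x.+1 != i /\ x.+1 != i.+1) ->
  T i (cword c s m) = cword c s (T i m).
Proof.
move=> i_range; elim: s => [|x s IH] //= s_far.
have [x_ne_i x_ne_i1] := s_far x (mem_head _ _).
by rewrite /comp T_c_far ?ord_gen // IH // => y y_s; apply: s_far; rewrite inE y_s orbT.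
Qed.

Lemma T_cword_eigen i (lam : R) (s : seq 'I_n) w : (1 <= i <= n.-1)%N ->
  (forall x : 'I_n, x \in s -> (x.+1 = i -> lam = 0) /\ (x.+1 = i.+1 -> lam = -1)) ->
  T i w = lam *: w -> T i (cword c s w) = lam *: cword c s w.
Proof.
move=> i_range; elim: s => [|x s IH] //= s_ok Tw.
have [lam0 lamN1] := s_ok x (mem_head _ _).
have {}IH : T i (cword c s w) = lam *: cword c s w.
  by apply: IH => // y y_s; apply: s_ok; rewrite inE y_s orbT.
rewrite /comp; set u := cword c s w.
case: (eqVneq x.+1 i) => [x_i|x_ne_i].
  by rewrite x_i T_c_left // IH (lam0 x_i) !scale0r (linf0 (c_lin (T_index_right i_range))).
case: (eqVneq x.+1 i.+1) => [x_i1|x_ne_i1].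
  rewrite x_i1 T_c_rightE // IH (lamN1 x_i1) scaleN1r (linfN (c_lin (T_index_left i_range))).
  by rewrite addNr add0r scaleN1r.
by rewrite T_c_far ?ord_gen // IH (linfZ (c_lin (ord_gen x))).
Qed.

Definition T_straight i (y : M -> M) := exists y1 y2, [/\ in_Cl n c y1, in_Cl n c y2 &
  forall m, T i (y m) = y1 (T i m) + y2 m].

Section Straightening.
Variable i : nat.
Hypothesis i_range : (1 <= i <= n.-1)%N.

Let in_Cl0 : in_Cl n c (fun _ => 0).
Proof.
apply: (@in_Cl_supp_eq _ _ _ _ _ (fun m => 0 *: cD c set0 m)) => [m|]; first by rewrite scale0r.
by apply: in_Cl_supp_monomial; right.
Qed.

Lemma T_straight_eq y y' : y =1 y' -> T_straight i y -> T_straight i y'.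
Proof. by move=> yy' [y1 [y2 [? ? Ty]]]; exists y1, y2; split => // m; rewrite -yy'. Qed.

Lemma T_straight_comb k y z : T_straight i y -> T_straight i z ->
  T_straight i (fun m => k *: y m + z m).
Proof.
move=> [y1 [y2 [y1_Cl y2_Cl Ty]]] [z1 [z2 [z1_Cl z2_Cl Tz]]].
exists (fun m => k *: y1 m + z1 m), (fun m => k *: y2 m + z2 m).
split; try exact: in_Cl_supp_comb.
by move=> m; rewrite (T_lin i_range) Ty Tz scalerDr; rewrite addrACA.
Qed.

Lemma T_straight_comp y z : in_Cl n c z -> T_straight i y -> T_straight i z ->
  T_straight i (y \o z).
Proof.
move=> z_Cl [y1 [y2 [y1_Cl y2_Cl Ty]]] [z1 [z2 [z1_Cl z2_Cl Tz]]].
exists (y1 \o z1), (fun m => 1 *: y1 (z2 m) + y2 (z m)); split.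
- exact: (in_Cl_comp Hc y1_Cl z1_Cl).
- by apply: in_Cl_supp_comb; [exact: (in_Cl_comp Hc y1_Cl z2_Cl)|exact: (in_Cl_comp Hc y2_Cl z_Cl)].
- by move=> m /=; rewrite Ty Tz (linfD (in_Cl_supp_lin Hc y1_Cl)) scale1r addrA.
Qed.

Lemma T_straight_gen k : (1 <= k <= n)%N -> T_straight i (c k).
Proof.
move=> k_range; case: (eqVneq k i) => [->|k_ne_i].
  exists (c i.+1), (fun _ => 0); split; first exact: in_Cl_gen (T_index_right i_range).
    exact: in_Cl0.
  by move=> m; rewrite addr0 T_c_left.
case: (eqVneq k i.+1) => [->|k_ne_i1].
  exists (c i), (fun m => (-1) *: c i.+1 m + c i m); split.
  - exact: in_Cl_gen (T_index_left i_range).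
  - by apply: in_Cl_supp_comb; apply: in_Cl_gen; [exact: T_index_right|exact: T_index_left].
  - by move=> m; rewrite T_c_rightE // scaleN1r [- _ + _]addrC addrA.
exists (c k), (fun _ => 0); split; [exact: in_Cl_gen|exact: in_Cl0|].
by move=> m; rewrite addr0 T_c_far.
Qed.

Lemma T_straight_Cl y : in_Cl n c y -> T_straight i y.
Proof.
move=> [a [_ y_a]]; apply: (T_straight_eq (y := ClOp c a)) => [m|]; first by rewrite y_a.
rewrite /ClOp; elim: (index_enum _) => [|D r IH].
  apply: (T_straight_eq (y := fun _ => 0)) => [m|]; first by rewrite big_nil.
  by exists (fun _ => 0), (fun _ => 0); split => // m; rewrite (linf0 (T_lin i_range)) addr0.
apply: (T_straight_eq (y := fun m => a D *: cD c D m + \sum_(j <- r) a j *: cD c j m)).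
  by move=> m; rewrite big_cons.
apply: T_straight_comb => //; rewrite cD_cword.
elim: (enum D) => [|x s IHs] /=.
  by exists id, (fun _ => 0); split => //; [exact: in_Cl_id|move=> m; rewrite addr0].
apply: T_straight_comp; [exact: (in_Cl_cword Hc)|exact: T_straight_gen (ord_gen x)|exact: IHs].
Qed.

End Straightening.

Section AdjacentPair.
Variables (a a' : 'I_n) (eps : M) (lam : R).
Hypothesis a'_succ : val a' = (val a).+1.
Hypothesis T_eps : T a.+1 eps = lam *: eps.

Let a_range : (1 <= a.+1 <= n.-1)%N.
Proof. by have := ltn_ord a'; rewrite a'_succ => a_lt; rewrite /= -ltnS (ltn_predK a_lt). Qed.

Let a_neq_a' : a != a'.
Proof. by rewrite -(inj_eq val_inj) a'_succ neq_ltn ltnSn. Qed.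

Lemma cD_window2 (X : {set 'I_n}) m : cD c X m = cword c (enum (set_lt a X))
  ((if a \in X then c a.+1 else id) ((if a' \in X then c a.+2 else id) (cD c (set_ge a.+2 X) m))).
Proof.
rewrite (cD_window c a X); congr (cword c _ _); congr ((if _ then _ else _) _).
rewrite (cD_window c a' (set_ge a.+1 X)).
have -> : set_lt a' (set_ge a.+1 X) = set0.
  by apply/setP => x; rewrite !inE a'_succ ltnS [(x <= a)%N]leqNgt -andbA andbN andbF.
have -> : a' \in set_ge a.+1 X = (a' \in X) by rewrite inE a'_succ leqnn andbT.
have -> : set_ge a'.+1 (set_ge a.+1 X) = set_ge a.+2 X.
  by apply/setP => x; rewrite !inE a'_succ -andbA (andb_idl (@ltnW a.+1 x)).
by rewrite enum_set0 a'_succ.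
Qed.

Lemma set_lt_ge_eq (X D : {set 'I_n}) :
  (forall x, x != a -> x != a' -> (x \in X) = (x \in D)) ->
  set_lt a X = set_lt a D /\ set_ge a.+2 X = set_ge a.+2 D.
Proof.
move=> XD; split; apply/setP => x; rewrite !inE.
  case: (eqVneq x a) => [->|x_ne_a]; first by rewrite ltnn !andbF.
  case: (eqVneq x a') => [->|x_ne_a']; first by rewrite a'_succ ltnNge leqnSn !andbF.
  by rewrite XD.
case: (eqVneq x a) => [->|x_ne_a]; first by rewrite ltnNge leqnSn !andbF.
case: (eqVneq x a') => [->|x_ne_a']; first by rewrite a'_succ ltnNge leqnn !andbF.
by rewrite XD.
Qed.

Lemma T_cD_eps_cases D : T a.+1 (cD c D eps) = match a \in D, a' \in D with
  | false, false => lam *: cD c D eps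
  | true, false => lam *: cD c (a' |: D :\ a) eps
  | false, true => (lam + 1) *: cD c (a |: D :\ a') eps - cD c D eps
  | true, true => cD c (D :\ a :\ a') eps - (lam + 1) *: cD c D eps
  end.
Proof.
set L := cword c (enum (set_lt a D)); set u := cD c (set_ge a.+2 D) eps.
have outside x : x \in enum (set_lt a D) \/ x \in enum (set_ge a.+2 D) ->
    x.+1 != a.+1 /\ x.+1 != a.+2.
  by rewrite !mem_enum !inE => -[] /andP[_ x_bd]; split; apply/eqP; lia.
have TL v : T a.+1 (L v) = L (T a.+1 v).
  by apply: T_cword_comm => // x x_lt; apply: outside; left.
have Tu : T a.+1 u = lam *: u.
  rewrite /u cD_cword T_cword_comm ?T_eps ?(linfZ (cword_lin Hc _)) // => x x_ge.
  by apply: outside; right.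
have L_lin : linear L := cword_lin Hc _.
have c1_lin := c_lin (T_index_left a_range).
have c2_lin := c_lin (T_index_right a_range).
have a2_ne_a1 : a.+2 != a.+1 by rewrite neq_ltn ltnSn orbT.
have eq_lt_ge (X : {set 'I_n}) : (forall x, x != a -> x != a' -> (x \in X) = (x \in D)) ->
    cD c X eps = L ((if a \in X then c a.+1 else id) ((if a' \in X then c a.+2 else id) u)).
  by move=> XD; have [lt_XD ge_XD] := set_lt_ge_eq XD; rewrite cD_window2 lt_XD ge_XD.
rewrite (eq_lt_ge D) //.
case: (boolP (a \in D)) => aD; case: (boolP (a' \in D)) => a'D /=.
- rewrite (eq_lt_ge (D :\ a :\ a')); last by move=> x xa xa'; rewrite !inE xa xa'.
  rewrite !inE !eqxx a_neq_a' eq_sym a_neq_a' /= TL T_c_left // T_c_rightE // Tu.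
  rewrite (linfZ c1_lin) (linfD c2_lin) (linfN c2_lin) (linfD c2_lin) (linfZ c2_lin).
  have [a1_range a2_range] := (T_index_left a_range, T_index_right a_range).
  rewrite c_sq // c_anti //.
  rewrite (linfD L_lin) (linfN L_lin) (linfD L_lin) (linfZ L_lin) !(linfN L_lin).
  by rewrite opprK scalerN scalerDl scale1r opprD [RHS]addrC.
- rewrite (eq_lt_ge (a' |: D :\ a)); last by move=> x xa xa'; rewrite !inE (negbTE xa) (negbTE xa').
  rewrite !inE !eqxx (negbTE a_neq_a') /=.
  by rewrite TL T_c_left // Tu (linfZ c2_lin) (linfZ L_lin).
- rewrite (eq_lt_ge (a |: D :\ a')); last by move=> x xa xa'; rewrite !inE (negbTE xa) (negbTE xa').
  rewrite !inE !eqxx (eq_sym a') (negbTE a_neq_a') /=.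
  rewrite TL T_c_rightE // Tu (linfZ c1_lin) !(linfD L_lin) (linfN L_lin) (linfZ L_lin).
  by rewrite scalerDl scale1r.
- by rewrite TL Tu (linfZ L_lin).
Qed.

Definition T_coef (D E : {set 'I_n}) : R := match a \in D, a' \in D with
  | false, false => lam * (E == D)%:R
  | true, false => lam * (E == a' |: D :\ a)%:R
  | false, true => (lam + 1) * (E == a |: D :\ a')%:R - (E == D)%:R
  | true, true => (E == D :\ a :\ a')%:R - (lam + 1) * (E == D)%:R
  end.

Lemma sum_delta (v : {set 'I_n} -> M) (k : R) E0 :
  \sum_E (k * (E == E0)%:R) *: v E = k *: v E0.
Proof.
rewrite (bigD1 E0) //= eqxx mulr1 big1 ?addr0 // => E /negbTE ->.
by rewrite mulr0 scale0r.
Qed.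

Lemma sum_delta1 (v : {set 'I_n} -> M) E0 : \sum_E (E == E0)%:R *: v E = v E0.
Proof. by rewrite -[RHS]scale1r -(sum_delta v); apply: eq_bigr => E _; rewrite mul1r. Qed.

Lemma T_cD_eps D : T a.+1 (cD c D eps) = \sum_E T_coef D E *: cD c E eps.
Proof.
rewrite T_cD_eps_cases /T_coef.
case: (a \in D); case: (a' \in D); rewrite ?sum_delta //;
  under eq_bigr do rewrite scalerBl; by rewrite sumrB sum_delta ?sum_delta1.
Qed.

Hypothesis eps_free : injective (fun b : {ffun {set 'I_n} -> R} => ClOp c b eps).

Lemma eigen_coef (b : {ffun {set 'I_n} -> R}) :
  T a.+1 (ClOp c b eps) = lam *: ClOp c b eps ->
  forall E, \sum_D b D * T_coef D E = lam * b E.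
Proof.
move=> b_eigen E0.
suff /ffunP/(_ E0) : [ffun E => \sum_D b D * T_coef D E] = [ffun E => lam * b E] by rewrite !ffunE.
apply: eps_free => /=; transitivity (T a.+1 (ClOp c b eps)); last first.
  by rewrite b_eigen /ClOp scaler_sumr; apply: eq_bigr => D _; rewrite ffunE scalerA.
rewrite /ClOp (linf_sum (T_lin a_range)).
under eq_bigr do rewrite ffunE scaler_suml.
rewrite exchange_big /=; apply: eq_bigr => D _.
by rewrite (linfZ (T_lin a_range)) T_cD_eps scaler_sumr; apply: eq_bigr => E _; rewrite scalerA.
Qed.

Definition outer (X : {set 'I_n}) := X :\ a :\ a'.

Definition same_outer (X Y : {set 'I_n}) := outer X == outer Y.

Lemma eq_set_outer (X Y : {set 'I_n}) :
  (X == Y) = [&& (a \in X) == (a \in Y), (a' \in X) == (a' \in Y) & same_outer X Y].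
Proof.
rewrite /same_outer; apply/eqP/and3P => [->|[/eqP aXY /eqP a'XY /eqP/setP outerXY]].
  by rewrite !eqxx.
apply/setP => x; case: (eqVneq x a) => [->//|x_ne_a]; case: (eqVneq x a') => [->//|x_ne_a'].
by have := outerXY x; rewrite !inE x_ne_a x_ne_a'.
Qed.

Lemma outer_setU1 x : x \in [set a; a'] -> forall X, outer (x |: X) = outer X.
Proof.
rewrite !inE => /orP[]/eqP-> X; apply/setP => y; rewrite !inE;
  by case: (eqVneq y a) => //; case: (eqVneq y a') => //; rewrite ?andbF.
Qed.

Lemma outer_setD1 x : x \in [set a; a'] -> forall X, outer (X :\ x) = outer X.
Proof.
rewrite !inE => /orP[]/eqP-> X; apply/setP => y; rewrite !inE;
  by case: (eqVneq y a) => //; case: (eqVneq y a') => //; rewrite ?andbF.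
Qed.

Let outerE := (outer_setU1 (set21 a a'), outer_setU1 (set22 a a'),
  outer_setD1 (set21 a a'), outer_setD1 (set22 a a')).

Ltac T_coef_cases X aD a'D :=
  rewrite /T_coef !eq_set_outer /same_outer ?outerE !inE ?eqxx;
  rewrite aD a'D ?(eq_sym a') ?(negbTE a_neq_a') /=;
  case: (a \in X); case: (a' \in X); rewrite /= ?[outer X == _]eq_sym; ring.

Lemma T_coef_outer (D : {set 'I_n}) : a \in D -> a' \in D -> forall X,
  T_coef X (D :\ a :\ a') = (X == D)%:R * 1 + (X == D :\ a :\ a')%:R * lam.
Proof. by move=> aD a'D X; T_coef_cases X aD a'D. Qed.

Lemma T_coef_a' (D : {set 'I_n}) : a \notin D -> a' \in D -> forall X,
  T_coef X (a |: D :\ a') = (X == D)%:R * (lam + 1).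
Proof. by move=> aD a'D X; T_coef_cases X (negbTE aD) a'D. Qed.

Lemma T_coef_a (D : {set 'I_n}) : a \in D -> a' \notin D -> forall X,
  T_coef X (a' |: D :\ a) = (X == D)%:R * lam + (X == a' |: D :\ a)%:R * (-1).
Proof. by move=> aD a'D X; T_coef_cases X aD (negbTE a'D). Qed.

Section EigenCoordinates.
Variable b : {ffun {set 'I_n} -> R}.
Hypothesis b_eigen : T a.+1 (ClOp c b eps) = lam *: ClOp c b eps.

Lemma eigen_coef2 E D1 D2 k1 k2 :
  (forall X, T_coef X E = (X == D1)%:R * k1 + (X == D2)%:R * k2) ->
  b D1 * k1 + b D2 * k2 = lam * b E.
Proof.
move=> col; rewrite -(eigen_coef b_eigen E).
have delta (D0 : {set 'I_n}) k : \sum_X b X * ((X == D0)%:R * k) = b D0 * k.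
  rewrite (bigD1 D0) //= eqxx mul1r big1 ?addr0 // => X /negbTE ->.
  by rewrite mul0r mulr0.
by under eq_bigr do rewrite col mulrDr; rewrite big_split /= !delta.
Qed.

Lemma eigen_coord_outer (D : {set 'I_n}) : a \in D -> a' \in D -> b D = 0.
Proof.
move=> aD a'D; have := eigen_coef2 (T_coef_outer aD a'D).
by rewrite mulr1 [b _ * lam]mulrC addrC -[RHS]addr0 => /addrI.
Qed.

Lemma eigen0_coord (D : {set 'I_n}) : lam = 0 -> a' \in D -> b D = 0.
Proof.
move=> lam0 a'D; case: (boolP (a \in D)) => aD; first exact: eigen_coord_outer.
have col X : T_coef X (a |: D :\ a') = (X == D)%:R * (lam + 1) + (X == D)%:R * 0.
  by rewrite T_coef_a' // mulr0 addr0.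
by have := eigen_coef2 col; rewrite lam0 add0r mulr1 mulr0 addr0 mul0r.
Qed.

Lemma eigenN1_coord (D : {set 'I_n}) : lam = -1 -> a \in D -> b D = 0.
Proof.
move=> lamN1 aD; case: (boolP (a' \in D)) => a'D; first exact: eigen_coord_outer.
have := eigen_coef2 (T_coef_a aD a'D); rewrite lamN1 !mulrN1 mulN1r -[RHS]add0r => /addIr/eqP.
by rewrite oppr_eq0 => /eqP.
Qed.

End EigenCoordinates.
End AdjacentPair.

Lemma HCl_endo_ClOp g : HCl_endo n T c g ->
  forall (a : {ffun {set 'I_n} -> R}) m, g (ClOp c a m) = ClOp c a (g m).
Proof.
case=> g_lin _ g_c a m; rewrite /ClOp (linf_sum g_lin); apply: eq_bigr => D _.
rewrite (linfZ g_lin) !cD_cword; congr (_ *: _).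
by elim: (enum D) => [|x s IH] //=; rewrite /comp g_c ?ord_gen // IH.
Qed.

Section InducedEndomorphisms.
Variables (eps : M) (lam : nat -> R).
Hypothesis eps_free : injective (fun a : {ffun {set 'I_n} -> R} => ClOp c a eps).
Hypothesis eps_span : forall m : M, exists a : {ffun {set 'I_n} -> R}, m = ClOp c a eps.
Hypothesis T_eps : forall i, (1 <= i <= n.-1)%N -> T i eps = lam i *: eps.

Let coord_ex m : exists a : {ffun {set 'I_n} -> R}, m == ClOp c a eps.
Proof. by have [a ->] := eps_span m; exists a. Qed.

Let coord m := xchoose (coord_ex m).

Let coordK m : m = ClOp c (coord m) eps.
Proof. exact/eqP/(xchooseP (coord_ex m)). Qed.

Let coord_ClOp (a : {ffun {set 'I_n} -> R}) : coord (ClOp c a eps) = a.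
Proof. by apply: eps_free; rewrite /= -coordK. Qed.

(* The universal property of [M_I = HCl_n(0) \otimes_{H_n(0)} S_I]. *)
Lemma HCl_endo_of_eigen w : (forall i, (1 <= i <= n.-1)%N -> T i w = lam i *: w) ->
  exists f, (forall x, in_Cl n c x -> f (x eps) = x w) /\ HCl_endo n T c f.
Proof.
move=> T_w; pose f m := ClOp c (coord m) w.
have f_Cl x : in_Cl n c x -> f (x eps) = x w by case=> a [_ x_a]; rewrite /f !x_a coord_ClOp.
exists f; split => //; split.
- move=> k u v; rewrite {1}(coordK u) {1}(coordK v) -ClOp_comb f_Cl ?ClOp_comb //.
  exact: in_Cl_ClOp.
- move=> j m j_range.
  have [y1 [y2 [y1_Cl y2_Cl Ty]]] := T_straight_Cl j_range (in_Cl_ClOp c (coord m)).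
  rewrite {1}(coordK m) Ty T_eps // (linfZ (in_Cl_supp_lin Hc y1_Cl)).
  rewrite (f_Cl (fun u => lam j *: y1 u + y2 u)); last exact: in_Cl_supp_comb.
  by rewrite /f Ty T_w // (linfZ (in_Cl_supp_lin Hc y1_Cl)).
- move=> j m j_range; rewrite {1}(coordK m).
  rewrite -[c j _]/((c j \o ClOp c (coord m)) eps) f_Cl //.
  exact: (in_Cl_comp Hc (in_Cl_gen c j_range) (in_Cl_ClOp c _)).
Qed.

End InducedEndomorphisms.
End Hecke.

Lemma Des_lt n I k : is_composition n I -> k \in Des I -> (k < n)%N.
Proof.
case/andP => I_pos /eqP <- /mapP[j]; rewrite mem_iota => /andP[j_gt0 j_lt] ->.
have j_lt_I : (j < size I)%N by move: j_gt0 j_lt; case: (size I) => /=; lia.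
rewrite -{2}(cat_take_drop j I) sumn_cat -{1}[sumn (take j I)]addn0 ltn_add2l.
rewrite (drop_nth 0%N j_lt_I) /= addn_gt0.
by have /= -> := allP I_pos _ (mem_nth 0%N j_lt_I).
Qed.

Section Valleys.
Variables (R : comNzRingType) (M : lmodType R) (n : nat) (I : seq nat).
Variables (T c : nat -> M -> M) (eps : M).
Hypothesis I_comp : is_composition n I.
Hypothesis HM : HCl_module n T c.
Hypothesis T_eps_Des : forall j, (1 <= j <= n.-1)%N ->
  T j eps = (if j \in Des I then - eps else 0).
Hypothesis eps_free : injective (fun a : {ffun {set 'I_n} -> R} => ClOp c a eps).
Hypothesis eps_span : forall m : M, exists a : {ffun {set 'I_n} -> R}, m = ClOp c a eps.

Let V := valleys n I.

Definition Des_char (j : nat) : R := if j \in Des I then -1 else 0.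

Let T_eps j : (1 <= j <= n.-1)%N -> T j eps = Des_char j *: eps.
Proof.
by move=> j_range; rewrite T_eps_Des // /Des_char; case: ifP; rewrite ?scaleN1r ?scale0r.
Qed.

Lemma valley_cD_eigen (D : {set 'I_n}) j : D \subset V -> (1 <= j <= n.-1)%N ->
  T j (cD c D eps) = Des_char j *: cD c D eps.
Proof.
move=> DV j_range; rewrite cD_cword (T_cword_eigen (lam := Des_char j) HM j_range) ?T_eps // => x.
rewrite mem_enum => /(subsetP DV); rewrite inE => /and3P[_ x_Des x_valley].
split=> [x_j|x_j1]; first by rewrite /Des_char -x_j (negbTE x_Des).
move: x_valley; rewrite x_j1 eqSS /Des_char /=; case/andP: j_range => j_gt0 _.
by case/orP => [/eqP j0|->] //; rewrite j0 in j_gt0.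
Qed.

Lemma ClV_eigen x : in_ClV c V x -> forall j, (1 <= j <= n.-1)%N ->
  T j (x eps) = Des_char j *: x eps.
Proof.
case=> a [a_supp x_a] j j_range; have T_lin : linear (T j) by case: HM => H _ _ _ _; apply: H.
rewrite x_a /ClOp (linf_sum T_lin) scaler_sumr; apply: eq_bigr => D _.
rewrite (linfZ T_lin); case: (boolP (D \subset V)) => DV; last by rewrite a_supp ?scale0r ?scaler0.
by rewrite valley_cD_eigen // !scalerA mulrC.
Qed.

Lemma eigen_coord_valleys (b : {ffun {set 'I_n} -> R}) : (forall j, (1 <= j <= n.-1)%N ->
    T j (ClOp c b eps) = Des_char j *: ClOp c b eps) ->
  forall D : {set 'I_n}, ~~ (D \subset V) -> b D = 0.
Proof.
move=> b_eigen D /subsetPn[d d_D]; rewrite inE /is_valley ltn_ord /=.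
case: (boolP (d.+1 \in Des I)) => [d_Des _|_]; rewrite /=.
  have d1_lt := Des_lt I_comp d_Des.
  have d_range : (1 <= d.+1 <= n.-1)%N by apply/andP; split => //; lia.
  apply: (@eigenN1_coord _ _ _ _ _ HM d (Ordinal d1_lt) eps (Des_char d.+1)) => //.
  - exact: T_eps.
  - exact: b_eigen.
  - by rewrite /Des_char d_Des.
rewrite negb_or eqSS -lt0n => /andP[d_gt0 d_notDes].
have d1_lt : (d.-1 < n)%N by move: (ltn_ord d); lia.
have d_range : (1 <= (Ordinal d1_lt).+1 <= n.-1)%N by rewrite /= prednK //; move: (ltn_ord d); lia.
apply: (@eigen0_coord _ _ _ _ _ HM (Ordinal d1_lt) d eps (Des_char (Ordinal d1_lt).+1)) => //=.
- by rewrite prednK.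
- exact: T_eps.
- exact: b_eigen.
- by rewrite /Des_char prednK // (negbTE d_notDes).
Qed.

Lemma ClV_is_fc_endo x : in_ClV c V x -> exists f, is_fc n c eps x f /\ HCl_endo n T c f.
Proof.
move=> x_V; have [f [f_Cl f_endo]] := HCl_endo_of_eigen HM eps_free eps_span T_eps (ClV_eigen x_V).
by exists f.
Qed.

Lemma HCl_endo_is_fc_ClV g : HCl_endo n T c g -> exists x, in_ClV c V x /\ is_fc n c eps x g.
Proof.
move=> g_endo; have [b g_eps] := eps_span (g eps).
have b_eigen j : (1 <= j <= n.-1)%N -> T j (ClOp c b eps) = Des_char j *: ClOp c b eps.
  case: g_endo => g_lin g_T _ j_range.
  by rewrite -g_eps -g_T // T_eps // (linfZ g_lin).
exists (ClOp c b); split; first by exists b; split => //; apply: eigen_coord_valleys.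
by move=> z [a [_ z_a]]; rewrite z_a (HCl_endo_ClOp g_endo) g_eps.
Qed.

End Valleys.

Theorem mainTheorem10 (R : rcfType) (n : nat) (I : seq nat)
  (M : lmodType R[i]) (T c : nat -> M -> M) (eps : M) :
  is_composition n I ->
  HCl_module n T c ->
  (forall j, (1 <= j <= n.-1)%N ->
     T j eps = (if j \in Des I then - eps else 0)) ->
  injective (fun a : {ffun {set 'I_n} -> R[i]} => ClOp c a eps) ->
  (forall m : M, exists a : {ffun {set 'I_n} -> R[i]}, m = ClOp c a eps) ->
  let V := valleys n I in
  [/\ (forall x, in_ClV c V x ->
         exists f, is_fc n c eps x f /\ HCl_endo n T c f),
      (forall (k : R[i]) x y f g, in_ClV c V x -> in_ClV c V y ->
         is_fc n c eps x f -> is_fc n c eps y g ->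
         is_fc n c eps (fun m => k *: x m + y m) (fun m => k *: f m + g m)),
      (forall x y f g, in_ClV c V x -> in_ClV c V y ->
         is_fc n c eps x f -> is_fc n c eps y g ->
         is_fc n c eps (x \o y) (g \o f)),
      (forall x f, in_ClV_even c V x -> is_fc n c eps x f -> even_map n c eps f)
        /\ (forall x f, in_ClV_odd c V x -> is_fc n c eps x f -> odd_map n c eps f) &
      [/\ (forall x y f, in_ClV c V x -> in_ClV c V y ->
             is_fc n c eps x f -> is_fc n c eps y f -> x =1 y) &
          (forall g, HCl_endo n T c g ->
             exists x, in_ClV c V x /\ is_fc n c eps x g)]].
Proof.
move=> I_comp HM T_eps eps_free eps_span V; have Hc := HCl_module_clifford HM.
split.
- exact: ClV_is_fc_endo.
- by move=> k x y f g _ _; apply: is_fc_comb.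
- by move=> x y f g /in_ClV_Cl x_Cl _; apply: is_fc_comp.
- by split=> x f; [apply: is_fc_even_map | apply: is_fc_odd_map].
- split; last exact: HCl_endo_is_fc_ClV.
  by move=> x y f /in_ClV_Cl x_Cl /in_ClV_Cl y_Cl; apply: is_fc_inj.
Qed.
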